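(* Let $G$ be a finite group acting principally on $X$ and $n\ge 2$. Then the sectional category of $\tilde\epsilon_n : M^{G,n}(X)\to X^n$, $(\alpha_1,\ldots,\alpha_n)\mapsto(\alpha_1(1),\ldots,\alpha_n(1))$, equals $\mathsf{TC}^G_{\mathsf{effv},n}(X)$.
   Context: All spaces are Hausdorff, path-connected and locally path-connected; $G$ acts on the right. $PX$ is the path space with compact-open topology. $M^G_n(X)$ is the subspace of $PX\times G\times\cdots\times G\times PX$ ($n$ path factors, $n-1$ group factors) of tuples $(\alpha_1,g_1,\ldots,g_{n-1},\alpha_n)$ with $\alpha_i(0)g_i=\alpha_{i+1}(0)$; $\epsilon_n:M^G_n(X)\to X^n$ sends such a tuple to $(\alpha_1(1),\ldots,\alpha_n(1))$, and $\mathsf{TC}^G_{\mathsf{effv},n}(X)$ is the (non-reduced) sectional category of $\epsilon_n$, i.e. the least number of open sets covering $X^n$ each admitting a continuous local section. $M^{G,n}(X)=\{(\alpha_1,\ldots,\alpha_n)\in(PX)^n:\alpha_i(0)G=\alpha_j(0)G\}$. The action is principal if it is free and $(x,xg)\mapsto g$ is continuous on $\{(x,xg)\}$. *)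

From HB Require Import structures.
From mathcomp Require Import all_boot all_order all_algebra all_fingroup.
From mathcomp Require Import all_classical all_reals.
From mathcomp Require Import topology function_spaces subtype_topology discrete_topology.
From mathcomp Require Import num_topology normedtype.

Unset Printing Implicit Defensive.

Import Order.TTheory GRing.Theory Num.Theory.
Import numFieldNormedType.Exports.
Local Open Scope classical_set_scope.
Local Open Scope ring_scope.

Notation unit_interval R := (set_type (`[0, 1]%classic : set R)).

Lemma zero_in_unit_interval (R : realType) : (0 : R) \in (`[0, 1]%classic : set R).
Proof. by rewrite inE /= in_itv /= lexx ler01. Qed.

Lemma one_in_unit_interval (R : realType) : (1 : R) \in (`[0, 1]%classic : set R).
Proof. by rewrite inE /= in_itv /= lexx ler01. Qed.

Definition I0 (R : realType) : unit_interval R := exist _ 0 (zero_in_unit_interval R).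
Definition I1 (R : realType) : unit_interval R := exist _ 1 (one_in_unit_interval R).

Section Defs.
Variable R : realType.
Local Notation I := (unit_interval R).

Definition path_in {X : topologicalType} (A : set X) (x y : X) : Prop :=
  exists f : I -> X, continuous f /\ f (I0 R) = x /\ f (I1 R) = y /\ forall t, A (f t).

Definition path_connected_space (X : topologicalType) : Prop :=
  (exists x : X, True) /\ forall x y : X, path_in setT x y.

Definition locally_path_connected (X : topologicalType) : Prop :=
  forall (x : X) (U : set X), nbhs x U ->
    exists V : set X, [/\ open V, V x, V `<=` U &
                         forall y z, V y -> V z -> path_in V y z].

(** The path space PX (compact-open topology): the ambient function space
    [PXa X] with the compact-open topology, PX being the subset of
    continuous maps. *)
Definition PXa (X : topologicalType) := {compact-open, I -> X}.
Definition is_path {X : topologicalType} (a : PXa X) : Prop :=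
  continuous (a : I -> X).

Definition is_right_action {X : topologicalType} {gT : finGroupType}
  (act : X -> gT -> X) : Prop :=
  (forall x, act x 1%g = x) /\ (forall x g h, act (act x g) h = act x (g * h)%g).

Definition continuous_action {X : topologicalType} {gT : finGroupType}
  (act : X -> gT -> X) : Prop :=
  continuous (fun p : X * discrete_topology gT => act p.1 p.2).

Definition principal_action {X : topologicalType} {gT : finGroupType}
  (act : X -> gT -> X) : Prop :=
  (forall x g, act x g = x -> g = 1%g) /\
  exists tau : X * X -> discrete_topology gT,
    (forall x g, tau (x, act x g) = g) /\
    {within [set p : X * X | exists g, p.2 = act p.1 g], continuous tau}.

Definition local_section {E B : topologicalType} (S : set E) (p : E -> B)
  (U : set B) : Prop :=
  exists s : B -> E, {within U, continuous s} /\
                     (forall b, U b -> S (s b) /\ p (s b) = b).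

(** [secat_le S p k] : B can be covered by k open sets admitting local sections;
    the sectional category is the least such k (infinite if none). *)
Definition secat_le {E B : topologicalType} (S : set E) (p : E -> B) (k : nat) : Prop :=
  exists U : 'I_k -> set B,
    (forall i, open (U i) /\ local_section S p (U i)) /\
    (forall b, exists i, U i b).

Definition Xpow (X : topologicalType) (n : nat) := {ptws 'I_n -> X}.

Definition MGn_amb (X : topologicalType) (gT : finGroupType) (n : nat) :=
  ({ptws 'I_n -> PXa X} * {ptws 'I_n.-1 -> discrete_topology gT})%type.

Definition MGn {X : topologicalType} {gT : finGroupType} (act : X -> gT -> X)
  (n : nat) : set (MGn_amb X gT n) :=
  [set p | (forall i, is_path (p.1 i)) /\
           forall (i j : 'I_n) (k : 'I_n.-1), val i = val k -> val j = (val k).+1 ->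
             act (p.1 i (I0 R)) (p.2 k) = p.1 j (I0 R)].

Definition eps_effv {X : topologicalType} {gT : finGroupType} (n : nat)
  (p : MGn_amb X gT n) : Xpow X n := fun i => p.1 i (I1 R).

Definition TC_effv_le {X : topologicalType} {gT : finGroupType}
  (act : X -> gT -> X) (n k : nat) : Prop :=
  secat_le (MGn act n) (@eps_effv X gT n) k.

Definition MGn_orb {X : topologicalType} {gT : finGroupType} (act : X -> gT -> X)
  (n : nat) : set {ptws 'I_n -> PXa X} :=
  [set a | (forall i, is_path (a i)) /\
           forall i j : 'I_n,
             [set act (a i (I0 R)) g | g in [set: gT]] =
             [set act (a j (I0 R)) g | g in [set: gT]]].

Definition eps_tilde {X : topologicalType} (n : nat)
  (a : {ptws 'I_n -> PXa X}) : Xpow X n := fun i => a i (I1 R).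

End Defs.

(* The two sectional categories agree because the two spaces are related by
   maps over X^n in both directions.  Forgetting the group elements sends
   M^G_n(X) into M^{G,n}(X), since consecutive initial points lie in one orbit.
   Conversely, for a principal action the unique g_i with
   alpha_i(0) g_i = alpha_{i+1}(0) depends continuously on the pair of initial
   points, so it can be adjoined continuously on M^{G,n}(X).  Composing local
   sections with these maps transfers open covers with local sections both ways. *)

From HB Require Import structures.
From mathcomp Require Import all_boot all_order all_algebra all_fingroup.
From mathcomp Require Import all_classical all_reals.
From mathcomp Require Import topology function_spaces subtype_topology discrete_topology.
From mathcomp Require Import num_topology normedtype.
Import numFieldNormedType.Exports.
Local Open Scope classical_set_scope.

Lemma within_continuous_comp_within {T U V : topologicalType}
    {A : set T} {B : set U} {f : T -> U} {g : U -> V} :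
  f @` A `<=` B -> {within A, continuous f} -> {within B, continuous g} ->
  {within A, continuous (g \o f)}.
Proof.
move=> fAB /subspace_continuousP cf /subspace_continuousP cg.
apply/subspace_continuousP => x Ax W /= Wgfx.
have fB y : A y -> B (f y) by move=> Ay; exact/fAB/imageP.
move: (cf _ Ax _ (cg _ (fB _ Ax) W Wgfx)); rewrite !nbhs_simpl /within /=.
by apply: filterS => y Wy Ay; exact: Wy Ay (fB _ Ay).
Qed.

Lemma within_continuous_pair {T U V : topologicalType} {A : set T}
    {f : T -> U} {g : T -> V} :
  {within A, continuous f} -> {within A, continuous g} ->
  {within A, continuous (fun x => (f x, g x))}.
Proof. by move=> cf cg x; apply: cvg_pair; [exact: cf | exact: cg]. Qed.

Lemma within_continuous_ptws {T : topologicalType} {A : set T} {I : Type}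
    {V : topologicalType} {h : T -> {ptws I -> V}} :
  (forall i, {within A, continuous (fun x => h x i)}) ->
  {within A, continuous h}.
Proof.
move=> ch x; apply/cvg_sup => i.
move: x; apply/(@continuousP _ (initial_topology (fun f : I -> V => f i))).
by move=> _ [B oB <-]; move/continuousP: (ch i); apply.
Qed.

Lemma compact_open_eval_continuous {U V : topologicalType} (t : U) :
  continuous (fun g : {compact-open, U -> V} => g t).
Proof.
apply/continuousP => O oO.
have -> : (fun g : {compact-open, U -> V} => g t) @^-1` O =
          [set g | g @` [set t] `<=` O].
  by apply/seteqP; split => g /=; [move=> Ogt _ [s -> <-] | apply; exists t].
by apply: compact_open_open => //; exact: compact_set1.
Qed.

Lemma secat_le_transfer {E E' B : topologicalType} {S : set E} {S' : set E'}
    {p : E -> B} {p' : E' -> B} {phi : E -> E'} {k : nat} :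
  {within S, continuous phi} ->
  (forall e, S e -> S' (phi e) /\ p' (phi e) = p e) ->
  secat_le S p k -> secat_le S' p' k.
Proof.
move=> cphi phiP [U [HU cover]]; exists U; split=> // i.
have [oU [s [cs sP]]] := HU i; split=> //; exists (phi \o s); split.
  apply: (within_continuous_comp_within _ cs cphi).
  by move=> _ [b Ub <-]; have [] := sP b Ub.
move=> b Ub; have [Ssb psb] := sP b Ub; have [S'phi p'phi] := phiP _ Ssb.
by split=> //=; rewrite p'phi.
Qed.

Lemma orbit_act {X : Type} {gT : finGroupType} (act : X -> gT -> X) :
  (forall x g h, act (act x g) h = act x (g * h)%g) ->
  forall x g, [set act (act x g) h | h in [set: gT]] = [set act x h | h in [set: gT]].
Proof.
move=> actM x g; apply/seteqP; split => _ [h _ <-].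
  by exists (g * h)%g => //; rewrite actM.
by exists (g^-1 * h)%g => //; rewrite actM mulKVg.
Qed.

Section EffectiveMotionSpaces.
Context {R : realType} {X : topologicalType} {gT : finGroupType}.
Context {act : X -> gT -> X}.
Hypothesis act1 : forall x, act x 1%g = x.
Hypothesis actM : forall x g h, act (act x g) h = act x (g * h)%g.

Local Notation I0 := (I0 R).
Local Notation orbit x := [set act x g | g in [set: gT]].

Lemma MGn_orb_fst (n : nat) (p : MGn_amb R X gT n.+1) :
  MGn R act n.+1 p -> MGn_orb R act n.+1 p.1.
Proof.
move=> [paths linked]; split=> // i j.
suff orbit0 (m : 'I_n.+1) : orbit (p.1 m I0) = orbit (p.1 ord0 I0) by rewrite !orbit0.
case: m => m; elim: m => [|m IHm] ltmn.
  by have -> : Ordinal ltmn = ord0 by exact: val_inj.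
have ltmn' : (m < n)%N by rewrite -ltnS.
by rewrite -(linked (Ordinal (ltnW ltmn)) _ (Ordinal ltmn')) // (orbit_act _ actM) IHm.
Qed.

Lemma orbit_transition {n : nat} {a : {ptws 'I_n.+1 -> PXa R X}} (i j : 'I_n.+1) :
  MGn_orb R act n.+1 a -> exists g, a j I0 = act (a i I0) g.
Proof.
move=> [_ orbit_eq].
have : orbit (a i I0) (a j I0) by rewrite (orbit_eq i j); exists 1%g => //; rewrite act1.
by case=> g _ <-; exists g.
Qed.

Section Transitions.
Variable tau : X * X -> discrete_topology gT.
Hypothesis tauP : forall x g, tau (x, act x g) = g.
Hypothesis tau_cont :
  {within [set p : X * X | exists g, p.2 = act p.1 g], continuous tau}.

Definition adjoin_transitions {n : nat} (a : {ptws 'I_n.+1 -> PXa R X}) :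
    MGn_amb R X gT n.+1 :=
  (a, fun k : 'I_n => tau (a (inord k) I0, a (inord k.+1) I0)).

Lemma adjoin_transitionsP (n : nat) (a : {ptws 'I_n.+1 -> PXa R X}) :
  MGn_orb R act n.+1 a -> MGn R act n.+1 (adjoin_transitions a).
Proof.
move=> orb_a; split=> [|i j k Hi Hj]; first by case: orb_a.
have -> : i = inord k by apply: val_inj; rewrite /= Hi inordK //; exact: leqW.
have -> : j = inord k.+1 by apply: val_inj; rewrite /= Hj inordK //; exact: ltn_ord.
rewrite /=; have [g ->] := orbit_transition (inord k) (inord k.+1) orb_a.
by rewrite tauP.
Qed.

Lemma adjoin_transitions_continuous (n : nat) :
  {within MGn_orb R act n.+1, continuous (@adjoin_transitions n)}.
Proof.
apply: within_continuous_pair.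
  by apply: continuous_subspaceT => ?; exact: cvg_id.
apply: within_continuous_ptws => k.
have initial_point (i : 'I_n.+1) : {within MGn_orb R act n.+1,
    continuous (fun a : {ptws 'I_n.+1 -> PXa R X} => a i I0)}.
  apply: continuous_subspaceT => a.
  exact: (continuous_comp (@proj_continuous _ _ i a) (compact_open_eval_continuous _ _)).
have orbit_pairs : (fun a : {ptws 'I_n.+1 -> PXa R X} =>
      (a (inord k) I0, a (inord k.+1) I0)) @` MGn_orb R act n.+1
    `<=` [set p | exists g, p.2 = act p.1 g].
  move=> _ [a orb_a <-].
  by have [g ->] := orbit_transition (inord k) (inord k.+1) orb_a; exists g.
exact: (within_continuous_comp_within orbit_pairs
  (within_continuous_pair (initial_point _) (initial_point _)) tau_cont).
Qed.

End Transitions.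
End EffectiveMotionSpaces.

Theorem mainTheorem4 (R : realType) (X : topologicalType) (gT : finGroupType)
  (act : X -> gT -> X) (n : nat) :
  hausdorff_space X ->
  path_connected_space R X ->
  locally_path_connected R X ->
  is_right_action act ->
  continuous_action act ->
  principal_action act ->
  (2 <= n)%N ->
  forall k : nat,
    secat_le (MGn_orb R act n) (@eps_tilde R X n) k <-> TC_effv_le R act n k.
Proof.
move=> _ _ _ [act1 actM] _ [_ [tau [tauP tau_cont]]].
case: n => [//|n] _ k; rewrite /TC_effv_le; split.
- apply: (secat_le_transfer (adjoin_transitions_continuous act1 tau tau_cont n)).
  by move=> a orb_a; split; [exact: adjoin_transitionsP | ].
- apply: (secat_le_transfer (phi := fst)) => [|p MGn_p].
    by apply: continuous_subspaceT => p; exact: cvg_fst.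
  by split; [exact: MGn_orb_fst | ].
Qed.
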